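(* Let $\theta,\theta'\in(0,1)$ with $\theta<\theta'/N$. Then the natural embedding $\iota:F_\theta\to F_{\theta'}$ (with norms $\|\cdot\|_\theta$ and $\|\cdot\|_{\theta'}$) is a nuclear operator.
   Context: $\Sigma_{\mathbf A}^+$ is the one-sided Markov shift on $N$ symbols given by an $N\times N$ zero-one aperiodic matrix $\mathbf A$. For $\theta\in(0,1)$, $d_\theta(\omega,\omega')=\theta^{\min\{m:\omega_m\ne\omega'_m\}}$, $F_\theta$ is the space of complex $d_\theta$-Lipschitz functions with norm $\|\phi\|_\theta=\|\phi\|_\infty+[\phi]_\theta$, $[\phi]_\theta$ the Lipschitz constant; $F_\theta\subset F_{\theta'}$ for $\theta<\theta'$. A bounded operator $T:E\to F$ between Banach spaces is nuclear if $Tx=\sum_n\lambda_n\langle x,x'_n\rangle y_n$ with $(\lambda_n)$ summable and $(x'_n)\subset E'$, $(y_n)\subset F$ bounded. *)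

From Stdlib Require Import Reals ClassicalEpsilon.
From Coquelicot Require Import Coquelicot.
Open Scope R_scope.
Open Scope C_scope.

(* Symbols are the naturals 0..N-1; a sequence is a map nat -> nat.
   The zero-one matrix A is given as a boolean relation on symbols. *)
Definition seq := nat -> nat.

Fixpoint sum_lt (N : nat) (f : nat -> nat) : nat :=
  match N with O => O | S n => (sum_lt n f + f n)%nat end.

Fixpoint mat_pow (N : nat) (A : nat -> nat -> bool) (k : nat) (i j : nat) : nat :=
  match k with
  | O => if Nat.eqb i j then 1%nat else 0%nat
  | S k' => sum_lt N (fun l => (mat_pow N A k' i l * (if A l j then 1 else 0))%nat)
  end.

Definition aperiodic (N : nat) (A : nat -> nat -> bool) : Prop :=
  exists k : nat, (1 <= k)%nat /\
    forall i j, (i < N)%nat -> (j < N)%nat -> (0 < mat_pow N A k i j)%nat.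

Definition in_sigma (N : nat) (A : nat -> nat -> bool) (w : seq) : Prop :=
  forall m, (w m < N)%nat /\ A (w m) (w (S m)) = true.

Definition first_diff (w w' : seq) : nat :=
  epsilon (inhabits 0%nat)
    (fun n => w n <> w' n /\ forall k, (k < n)%nat -> w k = w' k).

Definition dtheta (theta : R) (w w' : seq) : R :=
  if excluded_middle_informative (w = w') then 0%R else (theta ^ first_diff w w')%R.

Definition sup_norm N A (f : seq -> C) : R :=
  real (Lub_Rbar (fun r => exists w, in_sigma N A w /\ r = Cmod (f w))).

Definition lip_const N A (theta : R) (f : seq -> C) : R :=
  real (Lub_Rbar (fun r => exists w w', in_sigma N A w /\ in_sigma N A w' /\ w <> w' /\
                    r = (Cmod (f w - f w') / dtheta theta w w')%R)).

Definition norm_theta N A (theta : R) (f : seq -> C) : R :=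
  (sup_norm N A f + lip_const N A theta f)%R.

Definition in_F N A (theta : R) (f : seq -> C) : Prop :=
  (exists M : R, forall w, in_sigma N A w -> (Cmod (f w) <= M)%R) /\
  (exists L, forall w w', in_sigma N A w -> in_sigma N A w' ->
      (Cmod (f w - f w') <= L * dtheta theta w w')%R).

(* the embedding iota : F_theta -> F_theta' is nuclear:
   iota x = sum_n lam_n <x, x'_n> y_n with (lam_n) summable, (x'_n) a bounded
   sequence in the dual of F_theta and (y_n) a bounded sequence in F_theta',
   the series converging in ||.||_theta'. *)
Definition embedding_nuclear N A (theta theta' : R) : Prop :=
  exists (lam : nat -> C) (x' : nat -> (seq -> C) -> C) (y : nat -> seq -> C),
    ex_series (fun n => Cmod (lam n)) /\
    (forall n f g, in_F N A theta f -> in_F N A theta g ->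
        x' n (fun w => f w + g w) = x' n f + x' n g) /\
    (forall n (c : C) f, in_F N A theta f ->
        x' n (fun w => c * f w) = c * x' n f) /\
    (exists M, forall n f, in_F N A theta f ->
        (Cmod (x' n f) <= M * norm_theta N A theta f)%R) /\
    (forall n, in_F N A theta' (y n)) /\
    (exists K, forall n, (norm_theta N A theta' (y n) <= K)%R) /\
    (forall f, in_F N A theta f ->
       is_lim_seq (fun k => norm_theta N A theta'
                     (fun w => f w - sum_n (fun n => lam n * x' n f * y n w) k)) 0).

From Stdlib Require Import Reals Lia Lra ClassicalEpsilon FunctionalExtensionality.
From Coquelicot Require Import Coquelicot.
Open Scope R_scope.

(** Number the cylinders of length [n] by the base-[N] code [c < N^n] of
    their first [n] symbols and fix a point [rep n c] of [Sigma_A^+] in every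
    nonempty cylinder.  The sampling operator [P_n f (w) = f (rep n (code w))]
    satisfies [|f - P_n f| <= [f]_theta theta^n], and [P_n f - P_(n-1) f] is a
    combination of the indicators of the [N^n] cylinders of length [n], with
    coefficients of size at most [theta^(n-1) ||f||_theta].  Writing each
    indicator as [theta'^n] times a vector of [F_theta'] of norm at most 2,
    and each coefficient as [theta^n] times a functional of norm at most
    [1/theta], we get [f = sum_(n,c) (theta/theta')^n x_(n,c)(f) y_(n,c)]
    with weights summable because [sum_n N^n (theta/theta')^n < oo]. *)

Fixpoint psum {G : AbelianMonoid} (g : nat -> G) (k : nat) : G :=
  match k with O => zero | S k' => plus (psum g k') (g k') end.

(** Coquelicot's [sum_n g k] sums [k + 1] terms. *)
Lemma sum_n_psum {G : AbelianMonoid} (g : nat -> G) (k : nat) :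
  sum_n g k = psum g (S k).
Proof.
  induction k as [|k IH].
  - rewrite sum_O. simpl. now rewrite plus_zero_l.
  - rewrite sum_Sn, IH. reflexivity.
Qed.

Lemma psum_ext {G : AbelianMonoid} (g g' : nat -> G) (k : nat) :
  (forall i, (i < k)%nat -> g i = g' i) -> psum g k = psum g' k.
Proof.
  induction k as [|k IH]; intros H; [reflexivity|]. cbn [psum].
  rewrite (IH (fun i Hi => H i ltac:(lia))), (H k) by lia. reflexivity.
Qed.

Section Enumeration.

Variable N : nat.

(** [T n = 1 + N + ... + N^(n-1)]: the block of the [N^n] pairs [(n, c)],
    [c < N^n], occupies the indices [T n, ..., T (S n) - 1]. *)
Fixpoint T (n : nat) : nat :=
  match n with O => O | S n' => (T n' + N ^ n')%nat end.

Fixpoint dec (m : nat) : nat * nat :=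
  match m with
  | O => (0, 0)%nat
  | S m' => let (n, c) := dec m' in
            if Nat.eqb (S c) (N ^ n) then (S n, 0)%nat else (n, S c)
  end.

Definition level (m : nat) : nat := fst (dec m).
Definition slot (m : nat) : nat := snd (dec m).

Lemma dec_S (m : nat) :
  dec (S m) = let (n, c) := dec m in
              if Nat.eqb (S c) (N ^ n) then (S n, 0)%nat else (n, S c).
Proof. reflexivity. Qed.

Lemma T_mono (n n' : nat) : (n <= n')%nat -> (T n <= T n')%nat.
Proof. induction 1; simpl; lia. Qed.

Hypothesis N_pos : N <> 0%nat.

Lemma T_ge (n : nat) : (n <= T n)%nat.
Proof.
  induction n as [|n IH]; simpl; [lia|].
  pose proof (Nat.pow_nonzero N n N_pos). lia.
Qed.

Lemma dec_spec (n c : nat) : (c < N ^ n)%nat -> dec (T n + c) = (n, c).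
Proof.
  revert c. induction n as [|n IHn]; intros c; induction c as [|c IHc]; intros Hc.
  - reflexivity.
  - simpl in Hc. lia.
  - pose proof (Nat.pow_nonzero N n N_pos).
    replace (T (S n) + 0)%nat with (S (T n + (N ^ n - 1)))%nat by (simpl; lia).
    rewrite dec_S, IHn by lia.
    replace (S (N ^ n - 1)) with (N ^ n)%nat by lia. now rewrite Nat.eqb_refl.
  - rewrite Nat.add_succ_r, dec_S, IHc by lia.
    destruct (Nat.eqb_spec (S c) (N ^ S n)); [lia|reflexivity].
Qed.

Lemma dec_inv (m : nat) : (slot m < N ^ level m)%nat /\ m = (T (level m) + slot m)%nat.
Proof.
  unfold level, slot. induction m as [|m IH]; [simpl; lia|].
  rewrite dec_S. destruct (dec m) as [n c]. cbn [fst snd] in IH.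
  pose proof (Nat.pow_nonzero N (S n) N_pos).
  destruct (Nat.eqb_spec (S c) (N ^ n)); cbn [fst snd T]; lia.
Qed.

Lemma level_unbounded (n0 m : nat) : (T n0 <= m)%nat -> (n0 <= level m)%nat.
Proof.
  intros Hm. destruct (dec_inv m) as [Hc Hm'].
  destruct (Nat.le_gt_cases n0 (level m)) as [|Hlt]; [assumption|].
  pose proof (T_mono (S (level m)) n0 Hlt). simpl in *. lia.
Qed.

Lemma psum_blocks {G : AbelianMonoid} (g : nat -> nat -> G) (n c : nat) :
  (c <= N ^ n)%nat ->
  psum (fun m => g (level m) (slot m)) (T n + c) =
  plus (psum (fun j => psum (g j) (N ^ j)) n) (psum (g n) c).
Proof.
  assert (step : forall n c, (c < N ^ n)%nat ->
    psum (fun m => g (level m) (slot m)) (T n + S c) =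
    plus (psum (fun m => g (level m) (slot m)) (T n + c)) (g n c)).
  { intros n' c' Hc'. rewrite Nat.add_succ_r. cbn [psum].
    unfold level, slot. now rewrite dec_spec. }
  revert c. induction n as [|n IHn]; intros c; induction c as [|c IHc]; intros Hc.
  - simpl. now rewrite plus_zero_l.
  - rewrite step, IHc by lia. cbn [psum]. now rewrite plus_assoc.
  - rewrite Nat.add_0_r. change (T (S n)) with (T n + N ^ n)%nat.
    rewrite IHn by lia. cbn [psum]. now rewrite plus_zero_r.
  - rewrite step, IHc by lia. cbn [psum]. now rewrite plus_assoc.
Qed.

End Enumeration.

Definition agree (n : nat) (w w' : seq) : Prop := forall i, (i < n)%nat -> w i = w' i.

Lemma agree_le (n n' : nat) (w w' : seq) : (n <= n')%nat -> agree n' w w' -> agree n w w'.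
Proof. intros Hn H i Hi. apply H. lia. Qed.

(** [code N n w] reads the first [n] symbols of [w] as a base-[N] number;
    it numbers the cylinders of length [n]. *)
Fixpoint code (N n : nat) (w : seq) : nat :=
  match n with O => O | S n' => (code N n' w + w n' * N ^ n')%nat end.

Lemma code_lt (N n : nat) (w : seq) :
  (forall i, (i < n)%nat -> (w i < N)%nat) -> (code N n w < N ^ n)%nat.
Proof.
  induction n as [|n IH]; intros H; simpl; [lia|].
  specialize (IH (fun i Hi => H i ltac:(lia))). specialize (H n ltac:(lia)).
  nia.
Qed.

Lemma code_agree (N n : nat) (w w' : seq) : agree n w w' -> code N n w = code N n w'.
Proof.
  induction n as [|n IH]; intros H; simpl; [reflexivity|].
  rewrite (IH (agree_le n (S n) w w' ltac:(lia) H)), (H n) by lia. reflexivity.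
Qed.

Lemma code_inj (N n : nat) (w w' : seq) :
  (forall i, (i < n)%nat -> (w i < N)%nat) -> (forall i, (i < n)%nat -> (w' i < N)%nat) ->
  code N n w = code N n w' -> agree n w w'.
Proof.
  induction n as [|n IH]; intros Hw Hw' E i Hi; [lia|].
  assert (Hc : (code N n w < N ^ n)%nat) by (apply code_lt; intros; apply Hw; lia).
  assert (Hc' : (code N n w' < N ^ n)%nat) by (apply code_lt; intros; apply Hw'; lia).
  simpl in E. assert (E2 : w n = w' n) by nia.
  assert (E1 : code N n w = code N n w') by (rewrite E2 in E; lia).
  destruct (Nat.eq_dec i n) as [->|]; [assumption|].
  apply IH; [intros j Hj; apply Hw | intros j Hj; apply Hw' | exact E1 | ]; lia.
Qed.

Lemma in_sigma_lt (N : nat) (A : nat -> nat -> bool) (w : seq) (n : nat) :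
  in_sigma N A w -> forall i, (i < n)%nat -> (w i < N)%nat.
Proof. intros Hw i _. apply Hw. Qed.

Lemma pow_decr (x : R) (a b : nat) : 0 <= x <= 1 -> (a <= b)%nat -> x ^ b <= x ^ a.
Proof.
  intros Hx H. induction H as [|b _ IH]; [lra|].
  simpl. assert (0 <= x ^ b) by (apply pow_le; lra). nra.
Qed.

Lemma first_diff_spec (w w' : seq) : w <> w' ->
  w (first_diff w w') <> w' (first_diff w w') /\ agree (first_diff w w') w w'.
Proof.
  intros Hne. unfold first_diff. apply epsilon_spec.
  assert (Hex : exists n, w n <> w' n).
  { apply NNPP. intros Hn. apply Hne, functional_extensionality. intros x.
    apply NNPP. intros Hx. apply Hn. eauto. }
  destruct Hex as [n Hn].
  induction n as [n IH] using (well_founded_induction Nat.lt_wf_0).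
  destruct (classic (agree n w w')) as [Hall|Hno]; [eauto|].
  apply not_all_ex_not in Hno. destruct Hno as [k Hk].
  apply imply_to_and in Hk. destruct Hk as [Hk1 Hk2]. now apply (IH k).
Qed.

Lemma agree_first_diff (n : nat) (w w' : seq) :
  w <> w' -> (n <= first_diff w w')%nat -> agree n w w'.
Proof. intros Hne Hn. apply (agree_le _ _ _ _ Hn), first_diff_spec, Hne. Qed.

Lemma first_diff_agree (n : nat) (w w' : seq) :
  w <> w' -> agree n w w' -> (n <= first_diff w w')%nat.
Proof.
  intros Hne H. destruct (first_diff_spec w w' Hne) as [Hd _].
  destruct (Nat.le_gt_cases n (first_diff w w')) as [|Hlt]; [assumption|].
  exfalso. now apply Hd, H.
Qed.

Lemma dtheta_diag (th : R) (w : seq) : dtheta th w w = 0.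
Proof. unfold dtheta. destruct (excluded_middle_informative (w = w)); tauto. Qed.

Lemma dtheta_neq (th : R) (w w' : seq) : w <> w' -> dtheta th w w' = th ^ first_diff w w'.
Proof. intros. unfold dtheta. destruct (excluded_middle_informative (w = w')); tauto. Qed.

Lemma dtheta_agree (th : R) (n : nat) (w w' : seq) :
  0 <= th <= 1 -> agree n w w' -> dtheta th w w' <= th ^ n.
Proof.
  intros Hth H. destruct (excluded_middle_informative (w = w')) as [->|Hne].
  - rewrite dtheta_diag. now apply pow_le.
  - rewrite dtheta_neq by assumption. apply pow_decr; [lra|]. now apply first_diff_agree.
Qed.

Lemma lub_nonneg (E : R -> Prop) : (forall r, E r -> 0 <= r) -> 0 <= real (Lub_Rbar E).
Proof.
  intros H. destruct (Lub_Rbar_correct E) as [Hub Hl].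
  destruct (Lub_Rbar E) as [r| |] eqn:Hq; simpl; try lra.
  destruct (classic (exists r, E r)) as [[r0 Hr]|Hn].
  - specialize (Hub r0 Hr). specialize (H r0 Hr). simpl in Hub. lra.
  - assert (Hb : is_ub_Rbar E (Finite (r - 1))) by (intros x Hx; exfalso; eauto).
    specialize (Hl _ Hb). simpl in Hl. lra.
Qed.

Lemma lub_le (E : R -> Prop) (B : R) :
  0 <= B -> (forall r, E r -> r <= B) -> real (Lub_Rbar E) <= B.
Proof.
  intros HB H. destruct (Lub_Rbar_correct E) as [_ Hl].
  specialize (Hl (Finite B) H). destruct (Lub_Rbar E); simpl in *; lra.
Qed.

Lemma lub_ge (E : R -> Prop) (B r : R) :
  (forall r, E r -> r <= B) -> E r -> r <= real (Lub_Rbar E).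
Proof.
  intros H Hr. destruct (Lub_Rbar_correct E) as [Hub Hl].
  specialize (Hl (Finite B) H). specialize (Hub r Hr). destruct (Lub_Rbar E); simpl in *; lra.
Qed.

Definition lipschitz (N : nat) (A : nat -> nat -> bool) (th L : R) (f : seq -> C) : Prop :=
  forall w w', in_sigma N A w -> in_sigma N A w' ->
    Cmod (f w - f w')%C <= L * dtheta th w w'.

Section Norms.

Variables (N : nat) (A : nat -> nat -> bool).

Lemma lipschitz_intro (th L : R) (f : seq -> C) : 0 < th ->
  (forall w w', in_sigma N A w -> in_sigma N A w' -> w <> w' ->
     Cmod (f w - f w')%C <= L * th ^ first_diff w w') ->
  lipschitz N A th L f.
Proof.
  intros Hth H w w' Hw Hw'. destruct (excluded_middle_informative (w = w')) as [->|Hne].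
  - rewrite dtheta_diag, Rmult_0_r. replace (f w' - f w')%C with (RtoC 0) by ring.
    rewrite Cmod_0. lra.
  - rewrite dtheta_neq by assumption. now apply H.
Qed.

Lemma sup_norm_nonneg (f : seq -> C) : 0 <= sup_norm N A f.
Proof. apply lub_nonneg. intros r [w [_ ->]]. apply Cmod_ge_0. Qed.

Lemma lip_const_nonneg (th : R) (f : seq -> C) : 0 < th -> 0 <= lip_const N A th f.
Proof.
  intros Hth. apply lub_nonneg. intros r [w [w' [_ [_ [Hne ->]]]]].
  rewrite dtheta_neq by assumption. apply Rmult_le_pos; [apply Cmod_ge_0|].
  left. apply Rinv_0_lt_compat, pow_lt, Hth.
Qed.

Lemma norm_theta_nonneg (th : R) (f : seq -> C) : 0 < th -> 0 <= norm_theta N A th f.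
Proof.
  intros Hth. pose proof (sup_norm_nonneg f). pose proof (lip_const_nonneg th f Hth).
  unfold norm_theta. lra.
Qed.

Lemma norm_theta_ext (th : R) (f g : seq -> C) :
  (forall w, in_sigma N A w -> f w = g w) -> norm_theta N A th f = norm_theta N A th g.
Proof.
  intros H. unfold norm_theta, sup_norm, lip_const.
  f_equal; f_equal; apply Lub_Rbar_eqset; intros r.
  - split; intros [w [Hw ->]]; exists w; rewrite H by assumption; auto.
  - split; intros [w [w' [Hw [Hw' [Hne ->]]]]]; exists w, w'; rewrite !H by assumption; auto.
Qed.

Lemma norm_theta_le (th a b : R) (f : seq -> C) : 0 < th -> 0 <= a -> 0 <= b ->
  (forall w, in_sigma N A w -> Cmod (f w) <= a) -> lipschitz N A th b f ->
  norm_theta N A th f <= a + b.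
Proof.
  intros Hth Ha Hb Hsup Hlip. unfold norm_theta. apply Rplus_le_compat.
  - apply lub_le; [assumption|]. intros r [w [Hw ->]]. now apply Hsup.
  - apply lub_le; [assumption|]. intros r [w [w' [Hw [Hw' [Hne ->]]]]].
    specialize (Hlip w w' Hw Hw'). rewrite dtheta_neq in * by assumption.
    assert (0 < th ^ first_diff w w') by (apply pow_lt, Hth).
    apply Rmult_le_reg_r with (th ^ first_diff w w'); [assumption|].
    unfold Rdiv. rewrite Rmult_assoc, Rinv_l; lra.
Qed.

Lemma sup_norm_ge (th : R) (f : seq -> C) (w : seq) :
  in_F N A th f -> in_sigma N A w -> Cmod (f w) <= sup_norm N A f.
Proof.
  intros [[M HM] _] Hw. apply (lub_ge _ M); [|eauto].
  intros r [z [Hz ->]]. now apply HM.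
Qed.

Lemma lip_const_lipschitz (th : R) (f : seq -> C) :
  0 < th -> in_F N A th f -> lipschitz N A th (lip_const N A th f) f.
Proof.
  intros Hth [_ [L HL]]. apply lipschitz_intro; [assumption|]. intros w w' Hw Hw' Hne.
  assert (Hd : 0 < th ^ first_diff w w') by (apply pow_lt, Hth).
  assert (Hr : Cmod (f w - f w')%C / th ^ first_diff w w' <= lip_const N A th f).
  { apply (lub_ge _ (Rabs L)); [|exists w, w'; rewrite dtheta_neq; auto].
    intros r [z [z' [Hz [Hz' [Hzn ->]]]]].
    rewrite dtheta_neq by assumption.
    assert (Hd' : 0 < th ^ first_diff z z') by (apply pow_lt, Hth).
    apply Rmult_le_reg_r with (th ^ first_diff z z'); [assumption|].
    unfold Rdiv. rewrite Rmult_assoc, Rinv_l, Rmult_1_r by lra.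
    specialize (HL z z' Hz Hz'). rewrite dtheta_neq in HL by assumption.
    pose proof (Rle_abs L). nra. }
  unfold Rdiv in Hr. apply Rmult_le_compat_r with (r := th ^ first_diff w w') in Hr; [|lra].
  rewrite Rmult_assoc, Rinv_l, Rmult_1_r in Hr; lra.
Qed.

End Norms.

Section Sampling.

Variables (N : nat) (A : nat -> nat -> bool).

Definition nonempty (n c : nat) : Prop := exists z, in_sigma N A z /\ code N n z = c.

Definition rep (n c : nat) : seq :=
  epsilon (inhabits (fun _ : nat => 0%nat)) (fun z => in_sigma N A z /\ code N n z = c).

Lemma rep_spec (n c : nat) : nonempty n c -> in_sigma N A (rep n c) /\ code N n (rep n c) = c.
Proof. intros H. exact (epsilon_spec _ _ H). Qed.

Lemma rep_agree (n : nat) (w : seq) : in_sigma N A w ->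
  in_sigma N A (rep n (code N n w)) /\ agree n w (rep n (code N n w)).
Proof.
  intros Hw. destruct (rep_spec n (code N n w)) as [Hz Hc]; [now exists w|].
  split; [assumption|].
  apply (code_inj N n); [apply (in_sigma_lt N A w n Hw) | apply (in_sigma_lt N A _ n Hz) |].
  now rewrite Hc.
Qed.

Definition proj (f : seq -> C) (n : nat) (w : seq) : C := f (rep n (code N n w)).

(** [proj_prev f n] is P_(n-1) f, with the convention P_(-1) f = 0. *)
Definition proj_prev (f : seq -> C) (n : nat) (w : seq) : C :=
  match n with O => 0%C | S n' => proj f n' w end.

Lemma proj_local (f : seq -> C) (n : nat) (w w' : seq) :
  agree n w w' -> proj f n w = proj f n w'.
Proof. intros H. unfold proj. now rewrite (code_agree N n w w' H). Qed.

Lemma proj_prev_local (f : seq -> C) (n : nat) (w w' : seq) :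
  agree n w w' -> proj_prev f n w = proj_prev f n w'.
Proof.
  destruct n as [|n]; intros H; [reflexivity|].
  apply proj_local, (agree_le n (S n)); [lia|assumption].
Qed.

Lemma proj_approx (th L : R) (f : seq -> C) (n : nat) (w : seq) :
  0 <= th <= 1 -> 0 <= L -> lipschitz N A th L f -> in_sigma N A w ->
  Cmod (f w - proj f n w)%C <= L * th ^ n.
Proof.
  intros Hth HL Hf Hw. destruct (rep_agree n w Hw) as [Hz Hag].
  eapply Rle_trans; [apply Hf; assumption|].
  apply Rmult_le_compat_l; [assumption|]. now apply dtheta_agree.
Qed.

Definition coef (f : seq -> C) (n c : nat) : C :=
  if excluded_middle_informative (nonempty n c)
  then (f (rep n c) - proj_prev f n (rep n c))%C else 0%C.

Lemma coef_code (f : seq -> C) (n : nat) (w : seq) : in_sigma N A w ->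
  coef f n (code N n w) = (proj f n w - proj_prev f n w)%C.
Proof.
  intros Hw. unfold coef. destruct (excluded_middle_informative _) as [_|Hne].
  - destruct (rep_agree n w Hw) as [_ Hag]. now rewrite (proj_prev_local f n _ _ Hag).
  - exfalso. apply Hne. now exists w.
Qed.

Lemma coef_bound (th : R) (f : seq -> C) (n c : nat) : 0 < th <= 1 -> in_F N A th f ->
  Cmod (coef f n c) <= th ^ n / th * norm_theta N A th f.
Proof.
  intros Hth Hf.
  pose proof (sup_norm_nonneg N A f) as Hsup.
  pose proof (lip_const_nonneg N A th f ltac:(lra)) as Hlip.
  assert (Hinv : 1 <= / th) by (rewrite <- Rinv_1; apply Rinv_le_contravar; lra).
  assert (0 <= th ^ n) by (apply pow_le; lra).
  unfold coef, norm_theta in *. destruct (excluded_middle_informative _) as [Hne|_].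
  2: { rewrite Cmod_0. apply Rmult_le_pos; [unfold Rdiv; nra | lra]. }
  destruct (rep_spec n c Hne) as [Hz _]. destruct n as [|n]; cbn [proj_prev].
  - replace (f (rep 0 c) - 0)%C with (f (rep 0 c)) by ring.
    pose proof (sup_norm_ge N A th f _ Hf Hz). simpl in *. nra.
  - pose proof (proj_approx th _ f n _ ltac:(lra) Hlip (lip_const_lipschitz N A th f ltac:(lra) Hf) Hz).
    replace (th ^ S n / th) with (th ^ n) by (simpl; field; apply Rgt_not_eq; lra).
    assert (0 <= th ^ n) by (apply pow_le; lra). nra.
Qed.

(** The partial sums of the series will be the following mixtures of
    P_n f and P_(n-1) f; they only depend on the first [n] symbols and
    approximate [f] like P_(n-1) f does. *)
Definition mix (f : seq -> C) (n c : nat) (w : seq) : C :=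
  if Nat.ltb (code N n w) c then proj f n w else proj_prev f n w.

Lemma mix_local (f : seq -> C) (n c : nat) (w w' : seq) :
  agree n w w' -> mix f n c w = mix f n c w'.
Proof.
  intros H. unfold mix.
  now rewrite (code_agree N n w w' H), (proj_local f n w w' H), (proj_prev_local f n w w' H).
Qed.

Lemma mix_approx (th L : R) (f : seq -> C) (n c : nat) (w : seq) :
  0 <= th <= 1 -> 0 <= L -> lipschitz N A th L f -> in_sigma N A w ->
  Cmod (f w - mix f (S n) c w)%C <= L * th ^ n.
Proof.
  intros Hth HL Hf Hw. unfold mix. destruct (Nat.ltb _ _); cbn [proj_prev].
  - eapply Rle_trans; [apply (proj_approx th L f (S n)); assumption|].
    apply Rmult_le_compat_l; [assumption|]. apply pow_decr; [assumption|lia].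
  - apply (proj_approx th L f n); assumption.
Qed.

End Sampling.

Lemma psum_indicator {G : AbelianMonoid} (a k : nat) (v : G) :
  psum (fun c => if Nat.eqb a c then v else zero) k = if Nat.ltb a k then v else zero.
Proof.
  induction k as [|k IH]; [reflexivity|]. cbn [psum]. rewrite IH.
  destruct (Nat.ltb_spec a k), (Nat.eqb_spec a k), (Nat.ltb_spec a (S k)); try lia;
    rewrite ?plus_zero_l, ?plus_zero_r; reflexivity.
Qed.

Lemma plus_C (x y : C) : plus x y = (x + y)%C.
Proof. reflexivity. Qed.

Section Families.

Variables (N : nat) (A : nat -> nat -> bool) (th th' : R).

(** The decomposition indexed by cylinders [(n, c)]:
    [P_n f - P_(n-1) f = sum_c weight n * functional n c f * cylinder_vector n c],
    with [functional n c] of norm at most [1/theta] on [F_theta] and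
    [cylinder_vector n c] of norm at most 2 in [F_theta']. *)
Definition weight (n : nat) : R := (th / th') ^ n.

Definition functional (n c : nat) (f : seq -> C) : C :=
  (coef N A f n c * RtoC (/ th ^ n))%C.

Definition cylinder_vector (n c : nat) (w : seq) : C :=
  RtoC (th' ^ n * (if Nat.eqb (code N n w) c then 1 else 0)).

Lemma functional_add (n c : nat) (f g : seq -> C) :
  functional n c (fun w => f w + g w)%C = (functional n c f + functional n c g)%C.
Proof.
  unfold functional, coef, proj_prev, proj.
  destruct (excluded_middle_informative _); destruct n; ring.
Qed.

Lemma functional_scal (n c : nat) (k : C) (f : seq -> C) :
  functional n c (fun w => k * f w)%C = (k * functional n c f)%C.
Proof.
  unfold functional, coef, proj_prev, proj.
  destruct (excluded_middle_informative _); destruct n; ring.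
Qed.

Lemma functional_bound (n c : nat) (f : seq -> C) : 0 < th <= 1 -> in_F N A th f ->
  Cmod (functional n c f) <= / th * norm_theta N A th f.
Proof.
  intros Hth Hf. unfold functional. rewrite Cmod_mult, Cmod_R.
  assert (Hp : 0 < / th ^ n) by (apply Rinv_0_lt_compat, pow_lt; lra).
  rewrite Rabs_pos_eq by lra.
  pose proof (coef_bound N A th f n c Hth Hf) as Hc.
  apply Rmult_le_compat_r with (r := / th ^ n) in Hc; [|lra].
  eapply Rle_trans; [exact Hc|]. right. field.
  split; apply Rgt_not_eq; try apply pow_lt; lra.
Qed.

(** [cylinder_vector n c] is bounded by 1 and is 1-Lipschitz for [d_theta']:
    it only jumps between points that differ before index [n]. *)
Lemma cylinder_vector_sup (n c : nat) (w : seq) : 0 <= th' <= 1 ->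
  Cmod (cylinder_vector n c w) <= 1.
Proof.
  intros Hth'. unfold cylinder_vector. rewrite Cmod_R.
  assert (0 <= th' ^ n <= 1) by (split; [apply pow_le | apply (pow_decr th' 0 n)]; lra || lia).
  destruct (Nat.eqb _ _); rewrite Rabs_pos_eq; nra.
Qed.

Lemma cylinder_vector_lipschitz (n c : nat) : 0 < th' <= 1 ->
  lipschitz N A th' 1 (cylinder_vector n c).
Proof.
  intros Hth'. apply lipschitz_intro; [lra|]. intros w w' Hw Hw' Hne.
  unfold cylinder_vector.
  destruct (Nat.le_gt_cases n (first_diff w w')) as [Hle|Hlt].
  - rewrite (code_agree N n w w' (agree_first_diff n w w' Hne Hle)).
    replace (_ - _)%C with (RtoC 0) by ring. rewrite Cmod_0.
    pose proof (pow_le th' (first_diff w w')). lra.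
  - assert (th' ^ n <= th' ^ first_diff w w') by (apply pow_decr; lra || lia).
    assert (0 <= th' ^ n) by (apply pow_le; lra).
    rewrite <- RtoC_minus, Cmod_R.
    destruct (Nat.eqb _ c), (Nat.eqb _ c); unfold Rabs; destruct (Rcase_abs _); nra.
Qed.

Lemma cylinder_vector_norm (n c : nat) : 0 < th' <= 1 ->
  in_F N A th' (cylinder_vector n c) /\ norm_theta N A th' (cylinder_vector n c) <= 2.
Proof.
  intros Hth'. split.
  - split; exists 1.
    + intros w _. apply cylinder_vector_sup. lra.
    + now apply cylinder_vector_lipschitz.
  - replace 2 with (1 + 1) by ring. apply norm_theta_le; try lra.
    + intros. apply cylinder_vector_sup. lra.
    + now apply cylinder_vector_lipschitz.
Qed.

Lemma term_value (f : seq -> C) (n c : nat) (w : seq) :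
  0 < th -> 0 < th' -> in_sigma N A w ->
  (RtoC (weight n) * functional n c f * cylinder_vector n c w)%C =
  if Nat.eqb (code N n w) c then (proj N A f n w - proj_prev N A f n w)%C else 0%C.
Proof.
  intros Hth Hth' Hw. unfold weight, functional, cylinder_vector.
  destruct (Nat.eqb_spec (code N n w) c) as [<-|_].
  - assert (E : (th / th') ^ n * / th ^ n * (th' ^ n * 1) = 1).
    { unfold Rdiv. rewrite Rpow_mult_distr, pow_inv. field.
      split; apply pow_nonzero; lra. }
    rewrite coef_code by assumption.
    transitivity ((proj N A f n w - proj_prev N A f n w) *
                  RtoC ((th / th') ^ n * / th ^ n * (th' ^ n * 1)))%C.
    + rewrite !RtoC_mult. ring.
    + rewrite E. ring.
  - rewrite Rmult_0_r. ring.
Qed.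

Lemma block_sum (f : seq -> C) (n c : nat) (w : seq) :
  0 < th -> 0 < th' -> in_sigma N A w ->
  psum (fun c' => RtoC (weight n) * functional n c' f * cylinder_vector n c' w)%C c =
  (if Nat.ltb (code N n w) c then proj N A f n w - proj_prev N A f n w else 0 : C)%C.
Proof.
  intros Hth Hth' Hw.
  transitivity (psum (fun c' => if Nat.eqb (code N n w) c'
                  then (proj N A f n w - proj_prev N A f n w)%C else zero) c).
  - apply psum_ext. intros c' _. now apply term_value.
  - rewrite psum_indicator. reflexivity.
Qed.

Lemma partial_sum_mix (f : seq -> C) (k : nat) (w : seq) :
  N <> 0%nat -> 0 < th -> 0 < th' -> in_sigma N A w ->
  @eq C (sum_n (fun m => RtoC (weight (level N m)) * functional (level N m) (slot N m) f *
                         cylinder_vector (level N m) (slot N m) w)%C k)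
        (mix N A f (level N (S k)) (slot N (S k)) w).
Proof.
  intros HN Hth Hth' Hw. rewrite sum_n_psum.
  destruct (dec_inv N HN (S k)) as [Hc Hk].
  set (n := level N (S k)) in *. set (c := slot N (S k)) in *. rewrite Hk.
  pose proof (psum_blocks N HN
    (fun n c => RtoC (weight n) * functional n c f * cylinder_vector n c w)%C n c
    ltac:(lia)) as B.
  cbn beta in B. rewrite plus_C in B.
  rewrite B, block_sum by assumption.
  (* the complete blocks telescope to P_(n-1) f *)
  assert (Htele : forall j, @eq C (psum (fun j => psum (fun c' =>
      RtoC (weight j) * functional j c' f * cylinder_vector j c' w)%C (N ^ j)) j)
      (proj_prev N A f j w)).
  { induction j as [|j IH]; [reflexivity|]. cbn [psum]. rewrite plus_C, IH, block_sum by assumption.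
    pose proof (code_lt N j w (in_sigma_lt N A w j Hw)).
    destruct (Nat.ltb_spec (code N j w) (N ^ j)); [cbn [proj_prev]; ring | lia]. }
  rewrite Htele. unfold mix.
  destruct (Nat.ltb _ _); ring.
Qed.

End Families.

Section Remainder.

Variables (N : nat) (A : nat -> nat -> bool).

(** If [G] only depends on the first [S n] symbols and approximates the
    [L]-Lipschitz function [f] to within [L theta^n] on [Sigma_A^+], then
    [f - G] is [2 L (theta/theta')^n]-Lipschitz for [d_theta']: nearby
    points see the same [G], distant points see two small values. *)
Lemma remainder_lipschitz (th th' L : R) (n : nat) (f G : seq -> C) :
  0 < th < th' -> th' <= 1 -> 0 <= L -> lipschitz N A th L f ->
  (forall w w', agree (S n) w w' -> G w = G w') ->
  (forall w, in_sigma N A w -> Cmod (f w - G w)%C <= L * th ^ n) ->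
  lipschitz N A th' (2 * L * (th / th') ^ n) (fun w => f w - G w)%C.
Proof.
  intros Hth Hth' HL Hf HG Happ. apply lipschitz_intro; [lra|].
  intros w w' Hw Hw' Hne. set (d := first_diff w w').
  assert (Hq : 0 <= th / th' <= 1).
  { split; [apply Rlt_le, Rdiv_lt_0_compat; lra|].
    apply Rmult_le_reg_r with th'; [lra|]. unfold Rdiv. rewrite Rmult_assoc, Rinv_l; lra. }
  assert (Hsplit : forall j, th ^ j = (th / th') ^ j * th' ^ j).
  { intros j. rewrite <- Rpow_mult_distr. f_equal. field. lra. }
  assert (0 <= (th / th') ^ n) by (apply pow_le; lra).
  assert (0 <= th' ^ d) by (apply pow_le; lra).
  destruct (Nat.le_gt_cases (S n) d) as [Hle|Hlt].
  - rewrite (HG w w' (agree_first_diff _ _ _ Hne Hle)).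
    replace (f w - G w' - (f w' - G w'))%C with (f w - f w')%C by ring.
    eapply Rle_trans; [apply Hf; assumption|]. rewrite dtheta_neq, Hsplit by assumption.
    fold d. assert ((th / th') ^ d <= (th / th') ^ n) by (apply pow_decr; [lra|lia]).
    assert (L * ((th / th') ^ d * th' ^ d) <= L * ((th / th') ^ n * th' ^ d))
      by (apply Rmult_le_compat_l; [|apply Rmult_le_compat_r]; lra).
    assert (0 <= L * ((th / th') ^ n * th' ^ d)) by (repeat apply Rmult_le_pos; lra).
    lra.
  - replace (f w - G w - (f w' - G w'))%C with ((f w - G w) + - (f w' - G w'))%C by ring.
    eapply Rle_trans; [apply Cmod_triangle|]. rewrite Cmod_opp.
    pose proof (Happ w Hw). pose proof (Happ w' Hw'). rewrite Hsplit in *.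
    assert (th' ^ n <= th' ^ d) by (apply pow_decr; [lra|lia]).
    assert (L * ((th / th') ^ n * th' ^ n) <= L * (th / th') ^ n * th' ^ d).
    { rewrite <- Rmult_assoc. apply Rmult_le_compat_l; [apply Rmult_le_pos|]; lra. }
    lra.
Qed.

Lemma remainder_norm (th th' L : R) (n : nat) (f G : seq -> C) :
  0 < th < th' -> th' <= 1 -> 0 <= L -> lipschitz N A th L f ->
  (forall w w', agree (S n) w w' -> G w = G w') ->
  (forall w, in_sigma N A w -> Cmod (f w - G w)%C <= L * th ^ n) ->
  norm_theta N A th' (fun w => f w - G w)%C <= 3 * L * (th / th') ^ n.
Proof.
  intros Hth Hth' HL Hf HG Happ.
  assert (Hq : th <= th / th').
  { apply Rmult_le_reg_r with th'; [lra|]. unfold Rdiv. rewrite Rmult_assoc, Rinv_l; nra. }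
  assert (th ^ n <= (th / th') ^ n) by (apply pow_incr; lra).
  assert (0 <= th ^ n) by (apply pow_le; lra).
  eapply Rle_trans.
  - apply (norm_theta_le N A th' (L * th ^ n) (2 * L * (th / th') ^ n));
      [lra | apply Rmult_le_pos; assumption | | exact Happ |].
    + apply Rmult_le_pos; [lra|]. apply pow_le, Rlt_le, Rdiv_lt_0_compat; lra.
    + now apply remainder_lipschitz.
  - nra.
Qed.

End Remainder.

(** The partial sums of the series converge to [f] in [F_theta']: the
    remainder after [k] terms is [f - mix f n c] with [n = level (S k)],
    of norm at most [3 [f]_theta (theta/theta')^(n-1)]. *)
Lemma partial_sums_converge (N : nat) (A : nat -> nat -> bool) (th th' : R) (f : seq -> C) :
  N <> 0%nat -> 0 < th < th' -> th' < 1 -> in_F N A th f ->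
  is_lim_seq (fun k => norm_theta N A th' (fun w => f w -
    sum_n (fun m => RtoC (weight th th' (level N m)) * functional N A th (level N m) (slot N m) f *
                    cylinder_vector N th' (level N m) (slot N m) w) k)%C) 0.
Proof.
  intros HN Hth Hth' Hf.
  set (L := lip_const N A th f). set (q := th / th').
  assert (HL : 0 <= L) by (apply lip_const_nonneg; lra).
  assert (Hlip : lipschitz N A th L f) by (apply lip_const_lipschitz; [lra|assumption]).
  assert (Hq : 0 <= q < 1).
  { unfold q. split; [apply Rlt_le, Rdiv_lt_0_compat; lra|].
    apply Rmult_lt_reg_r with th'; [lra|]. unfold Rdiv. rewrite Rmult_assoc, Rinv_l; lra. }
  apply (is_lim_seq_le_le (fun _ => 0) _ (fun k => 3 * L * q ^ pred (level N (S k)))).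
  - intros k. split; [apply norm_theta_nonneg; lra|].
    destruct (dec_inv N HN (S k)) as [Hc Hk].
    destruct (level N (S k)) as [|n] eqn:Hn; [simpl in Hc, Hk; lia|]. cbn [pred].
    rewrite (norm_theta_ext N A th' _ (fun w => f w - mix N A f (S n) (slot N (S k)) w)%C).
    + apply remainder_norm; try (assumption || lra).
      * intros w w' Hag. now apply mix_local.
      * intros w Hw. apply mix_approx; (assumption || lra).
    + intros w Hw. rewrite partial_sum_mix, Hn by (assumption || lra). reflexivity.
  - apply is_lim_seq_const.
  - replace (Finite 0) with (Rbar_mult (3 * L) 0) by (simpl; f_equal; ring).
    apply is_lim_seq_scal_l.
    apply (is_lim_seq_subseq (fun n => q ^ n)).
    + intros P [M HM]. exists (T N (S M)). intros k Hk. apply HM.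
      pose proof (level_unbounded N HN (S M) (S k) ltac:(lia)). lia.
    + apply is_lim_seq_geom. rewrite Rabs_pos_eq; lra.
Qed.

Lemma plus_R (x y : R) : plus x y = x + y.
Proof. reflexivity. Qed.

Lemma psum_const (x : R) (n : nat) : @eq R (psum (fun _ => x) n) (INR n * x).
Proof.
  induction n as [|n IH]; cbn [psum].
  - symmetry. apply Rmult_0_l.
  - rewrite plus_R, IH, S_INR. ring.
Qed.

Lemma psum_mono (g : nat -> R) (k j : nat) :
  (forall m, 0 <= g m) -> (k <= j)%nat -> psum g k <= psum g j.
Proof.
  intros Hg Hkj. induction Hkj as [|j _ IH]; [lra|].
  cbn [psum]. rewrite plus_R. specialize (Hg j). lra.
Qed.

Lemma psum_geom_le (r : R) (n : nat) : 0 <= r < 1 -> psum (fun j => r ^ j) n <= / (1 - r).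
Proof.
  intros Hr. assert (E : @eq R (psum (fun j => r ^ j) n * (1 - r)) (1 - r ^ n)).
  { induction n as [|n IH]; cbn [psum].
    - rewrite Rmult_0_l. simpl. ring.
    - rewrite plus_R, Rmult_plus_distr_r, IH. simpl. ring. }
  assert (0 <= r ^ n) by (apply pow_le; lra).
  apply Rmult_le_reg_r with (1 - r); [lra|]. rewrite E, Rinv_l; lra.
Qed.

(** The weights [q^level m] are summable when [N q < 1]: the block of
    level [n] contributes [(N q)^n]. *)
Lemma weights_summable (N : nat) (q : R) : N <> 0%nat -> 0 <= q -> INR N * q < 1 ->
  ex_series (fun m => q ^ level N m).
Proof.
  intros HN Hq HNq.
  assert (Hbd : forall k, sum_n (fun m => q ^ level N m) k <= / (1 - INR N * q)).
  { intros k. rewrite sum_n_psum.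
    eapply Rle_trans.
    { apply (psum_mono _ (S k) (T N (S k) + 0)); [intros; now apply pow_le|].
      pose proof (T_ge N HN (S k)). lia. }
    pose proof (psum_blocks N HN (fun n _ => q ^ n) (S k) 0 ltac:(lia)) as B.
    cbn beta in B. rewrite B, plus_R.
    replace (psum (fun _ : nat => q ^ S k) 0) with 0 by reflexivity. rewrite Rplus_0_r.
    rewrite (psum_ext _ (fun j => (INR N * q) ^ j)).
    - apply psum_geom_le. split; [apply Rmult_le_pos; [apply pos_INR|]|]; assumption.
    - intros j _. now rewrite psum_const, pow_INR, Rpow_mult_distr. }
  assert (Hincr : forall k, sum_n (fun m => q ^ level N m) k <=
                           sum_n (fun m => q ^ level N m) (S k)).
  { intros k. rewrite sum_Sn, plus_R. pose proof (pow_le q (level N (S k)) Hq). lra. }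
  destruct (ex_finite_lim_seq_incr _ _ Hincr Hbd) as [l Hl].
  exists l. exact Hl.
Qed.

Lemma ratio_bounds (N : nat) (th th' : R) : 0 < th -> 0 < th' -> th < th' / INR N ->
  N <> 0%nat /\ INR N * (th / th') < 1 /\ th < th'.
Proof.
  intros Hth Hth' Hlt.
  assert (HN : N <> 0%nat).
  { intros ->. unfold Rdiv in Hlt. simpl in Hlt. rewrite Rinv_0, Rmult_0_r in Hlt. lra. }
  assert (HN1 : 1 <= INR N) by (apply (le_INR 1); lia).
  assert (HNt : th * INR N < th').
  { apply Rmult_lt_compat_r with (r := INR N) in Hlt; [|lra].
    unfold Rdiv in Hlt. rewrite Rmult_assoc, Rinv_l in Hlt; lra. }
  split; [assumption|split; [|nra]].
  replace (INR N * (th / th')) with (th * INR N / th') by (field; lra).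
  apply Rmult_lt_reg_r with th'; [lra|]. unfold Rdiv.
  rewrite Rmult_assoc, Rinv_l by lra. lra.
Qed.

Theorem lemmaB3 (N : nat) (A : nat -> nat -> bool) (theta theta' : R) :
  aperiodic N A ->
  0 < theta < 1 -> 0 < theta' < 1 ->
  theta < theta' / INR N ->
  embedding_nuclear N A theta theta'.
Proof.
  intros _ Hth Hth' Hlt.
  destruct (ratio_bounds N theta theta' ltac:(lra) ltac:(lra) Hlt) as [HN [HNq Htt]].
  exists (fun m => RtoC (weight theta theta' (level N m))),
         (fun m => functional N A theta (level N m) (slot N m)),
         (fun m => cylinder_vector N theta' (level N m) (slot N m)).
  split; [|split; [|split; [|split; [|split; [|split]]]]].
  - apply (ex_series_ext (fun m => (theta / theta') ^ level N m)).
    + intros m. unfold weight. rewrite Cmod_R, Rabs_pos_eq; [reflexivity|].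
      apply pow_le, Rlt_le, Rdiv_lt_0_compat; lra.
    + apply weights_summable; [assumption | apply Rlt_le, Rdiv_lt_0_compat; lra | assumption].
  - intros m f g _ _. apply functional_add.
  - intros m k f _. apply functional_scal.
  - exists (/ theta). intros m f Hf. apply functional_bound; [lra | assumption].
  - intros m. apply cylinder_vector_norm. lra.
  - exists 2. intros m. apply cylinder_vector_norm. lra.
  - intros f Hf. apply partial_sums_converge; (assumption || lra).
Qed.
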